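(* Let $n\ge 3$ and let $(a_{\mathbf{i}})_{\mathbf{i}\in\mathbb{Z}^n}$ be either an $\mathrm{SL}_2$-tiling or an anti-$\mathrm{SL}_2$-tiling of $\mathbb{Z}^n$. Then for every $r\in\mathbb{Z}$, the value $a_{\mathbf{i}}$ is the same for all $\mathbf{i}=(i_1,\dots,i_n)\in\mathbb{Z}^n$ with $i_1+\dots+i_n=r$.
   Context: Write $\mathbf{i}=(i_1,\dots,i_n)\in\mathbb{Z}^n$ and $\mathbf{e}_k$ for the $k$-th standard unit vector. An $\mathrm{SL}_2$-tiling (resp. anti-$\mathrm{SL}_2$-tiling) of $\mathbb{Z}^n$ is an array $(a_{\mathbf{i}})_{\mathbf{i}\in\mathbb{Z}^n}$ with all $a_{\mathbf{i}}\in\mathbb{Z}_{>0}$ such that for all $\mathbf{i}\in\mathbb{Z}^n$ and all $k\ne\ell$: $a_{\mathbf{i}+\mathbf{e}_\ell}a_{\mathbf{i}+\mathbf{e}_k}-a_{\mathbf{i}}a_{\mathbf{i}+\mathbf{e}_k+\mathbf{e}_\ell}=1$ (resp. $=-1$). *)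

From HB Require Import structures.
From mathcomp Require Import all_boot all_order all_algebra.
Set Implicit Arguments. Unset Strict Implicit. Unset Printing Implicit Defensive.
Import Order.TTheory GRing.Theory Num.Theory.
Local Open Scope ring_scope.

Definition unitv (n : nat) (k : 'I_n) : {ffun 'I_n -> int} :=
  [ffun j => if j == k then 1 else 0].

Definition tiling_with (n : nat) (eps : int) (a : {ffun 'I_n -> int} -> int) : Prop :=
  (forall i, 0 < a i) /\
  (forall (i : {ffun 'I_n -> int}) (k l : 'I_n), k != l ->
     a (i + unitv l) * a (i + unitv k) - a i * a (i + unitv k + unitv l) = eps).

Definition SL2_tiling (n : nat) (a : {ffun 'I_n -> int} -> int) : Prop :=
  tiling_with 1 a.

Definition antiSL2_tiling (n : nat) (a : {ffun 'I_n -> int} -> int) : Prop :=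
  tiling_with (-1) a.

Definition coord_sum (n : nat) (i : {ffun 'I_n -> int}) : int := \sum_(k < n) i k.

From HB Require Import structures.
From mathcomp Require Import all_boot all_order all_algebra.
From mathcomp Require Import ring zify.
Set Implicit Arguments. Unset Strict Implicit. Unset Printing Implicit Defensive.
Import Order.TTheory GRing.Theory Num.Theory.
Local Open Scope ring_scope.

(** Fix three distinct directions k, l, m and a base point i.  Writing the
    tiling relation on the faces of the unit cube spanned at i, one can
    eliminate every vertex of the cube except a_i, a_{i+e_k}, a_{i+e_l}, and
    is left with eps (a_{i+e_k} - a_{i+e_l}) (a_{i+e_k} a_{i+e_l} - eps + a_i^2) = 0.
    Positivity makes the last factor nonzero, so neighbours of i in directions
    k and l carry the same value.  Hence a is invariant under the translations
    e_k - e_l, which generate the lattice of vectors with coordinate sum 0. *)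

(* x = a_i; bk, bl, bm = a_{i+e_k}, a_{i+e_l}, a_{i+e_m};
   ckl, ckm, clm = a_{i+e_k+e_l}, ...; d = a_{i+e_k+e_l+e_m}. *)
Lemma cube_neighbors_eq (eps x bk bl bm ckl ckm clm d : int) :
  eps != 0 -> eps <= 1 -> 0 < x -> 0 < bk -> 0 < bl ->
  bl * bk - x * ckl = eps ->
  bm * bk - x * ckm = eps ->
  bm * bl - x * clm = eps ->
  ckm * ckl - bk * d = eps ->
  clm * ckl - bl * d = eps ->
  bk = bl.
Proof.
move=> eps_neq0 eps_le1 x_gt0 bk_gt0 bl_gt0 e_kl e_km e_lm e_klm e_lkm.
have x_ckl : x * ckl = bk * bl - eps by rewrite -e_kl; ring.
have dk : x ^+ 2 * bk * d = (bk * bl - eps) * (bk * bm - eps) - x ^+ 2 * eps.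
  have -> : x ^+ 2 * bk * d = (x * ckl) * (x * ckm) - x ^+ 2 * (ckm * ckl - bk * d)
    by ring.
  by rewrite e_klm x_ckl -e_km; congr (_ * _ - _); ring.
have dl : x ^+ 2 * bl * d = (bk * bl - eps) * (bl * bm - eps) - x ^+ 2 * eps.
  have -> : x ^+ 2 * bl * d = (x * ckl) * (x * clm) - x ^+ 2 * (clm * ckl - bl * d)
    by ring.
  by rewrite e_lkm x_ckl -e_lm; congr (_ * _ - _); ring.
have : eps * ((bk - bl) * (bk * bl - eps + x ^+ 2)) = 0.
  transitivity (bl * (x ^+ 2 * bk * d) - bk * (x ^+ 2 * bl * d)); last by ring.
  by rewrite dk dl; ring.
have factor_neq0 : bk * bl - eps + x ^+ 2 != 0.
  have : 0 < bk * bl by rewrite mulr_gt0.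
  have : 0 < x ^+ 2 by rewrite exprn_gt0.
  lia.
move/eqP; rewrite !mulf_eq0 (negbTE eps_neq0) (negbTE factor_neq0) orbF /=.
by rewrite subr_eq0 => /eqP.
Qed.

Lemma exists_ord_neq2 (n : nat) (k l : 'I_n) :
  (3 <= n)%N -> exists m : 'I_n, (k != m) && (l != m).
Proof.
move=> n_ge3; apply/existsP; apply: contraTT n_ge3.
rewrite negb_exists => /forallP kl_only.
have : (#|'I_n| <= #|pred2 k l|)%N.
  apply/subset_leq_card/subsetP => m _ /=.
  by move: (kl_only m); rewrite negb_and !negbK ![_ == m]eq_sym.
by rewrite card2 card_ord; case: (k != l) => /=; lia.
Qed.

Lemma shift_invariant_mulrz (V : zmodType) (T : Type) (f : V -> T) (v : V) :
  (forall x, f (x + v) = f x) -> forall (c : int) x, f (x + v *~ c) = f x.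
Proof.
move=> fv; have fNv x : f (x - v) = f x by rewrite -[in RHS](subrK v x) fv.
elim/int_rec => [|c IH|c IH] x; first by rewrite mulr0z addr0.
  by rewrite -[c.+1]addn1 PoszD mulrzDr mulr1z addrA fv IH.
by rewrite -[c.+1]addn1 PoszD opprD mulrzDr mulrN1z addrA fNv IH.
Qed.

Lemma shift_invariant_sum (V : zmodType) (T I : Type) (f : V -> T)
    (s : seq I) (F : I -> V) :
  (forall k x, f (x + F k) = f x) -> forall x, f (x + \sum_(k <- s) F k) = f x.
Proof.
move=> fF; elim: s => [|k s IH] x; first by rewrite big_nil addr0.
by rewrite big_cons addrCA addrC fF IH.
Qed.

Lemma ffun_sum_unitv (n : nat) (i : {ffun 'I_n -> int}) :
  \sum_(k < n) unitv k *~ i k = i.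
Proof.
apply/ffunP => j; rewrite sum_ffunE (bigD1 j) //= big1 => [|k k_neq_j].
  by rewrite ffunMzE ffunE eqxx intz addr0.
by rewrite ffunMzE ffunE (ifN_eqC _ _ k_neq_j) mul0rz.
Qed.

Lemma unitv_mulrz_coord_sum (n : nat) (k0 : 'I_n) (i : {ffun 'I_n -> int}) :
  unitv k0 *~ coord_sum i = i + \sum_(k < n) (unitv k0 - unitv k) *~ i k.
Proof.
rewrite /coord_sum mulrz_sumr.
under [X in _ = _ + X]eq_bigr => k _ do rewrite mulrzBl.
by rewrite sumrB ffun_sum_unitv addrC subrK.
Qed.

Section TilingLevels.
Variables (n : nat) (eps : int) (a : {ffun 'I_n -> int} -> int).
Hypotheses (n_ge3 : (3 <= n)%N) (eps_neq0 : eps != 0) (eps_le1 : eps <= 1).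
Hypothesis a_tiling : tiling_with eps a.

Lemma tiling_neighbors_eq (i : {ffun 'I_n -> int}) (k l : 'I_n) :
  a (i + unitv k) = a (i + unitv l).
Proof.
have [->|k_neq_l] := eqVneq k l; first by [].
have [m /andP[k_neq_m l_neq_m]] := exists_ord_neq2 k l n_ge3.
have [a_gt0 a_rel] := a_tiling.
have e_klm := a_rel (i + unitv k) l m l_neq_m.
have e_lkm := a_rel (i + unitv l) k m k_neq_m.
rewrite (addrAC i (unitv l) (unitv k)) in e_lkm.
exact: cube_neighbors_eq eps_neq0 eps_le1 (a_gt0 i) (a_gt0 _) (a_gt0 _)
  (a_rel i k l k_neq_l) (a_rel i k m k_neq_m) (a_rel i l m l_neq_m) e_klm e_lkm.
Qed.

Lemma tiling_shift_invariant (k l : 'I_n) (x : {ffun 'I_n -> int}) :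
  a (x + (unitv k - unitv l)) = a x.
Proof.
by rewrite addrA addrAC (tiling_neighbors_eq _ k l) subrK.
Qed.

Lemma tiling_eq_of_coord_sum_eq (i j : {ffun 'I_n -> int}) :
  coord_sum i = coord_sum j -> a i = a j.
Proof.
pose k0 : 'I_n := Ordinal (leq_trans (isT : (0 < 3)%N) n_ge3).
have a_level x : a x = a (unitv k0 *~ coord_sum x).
  rewrite unitv_mulrz_coord_sum shift_invariant_sum // => k y.
  exact/shift_invariant_mulrz/tiling_shift_invariant.
by move=> ij_sum; rewrite a_level ij_sum -a_level.
Qed.

End TilingLevels.

Theorem lemma2p2 (n : nat) (hn : (3 <= n)%N) (a : {ffun 'I_n -> int} -> int) :
  SL2_tiling a \/ antiSL2_tiling a ->
  forall (r : int) (i j : {ffun 'I_n -> int}),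
    coord_sum i = r -> coord_sum j = r -> a i = a j.
Proof.
move=> a_tiling r i j <- /esym ij_sum.
case: a_tiling => tiling.
- exact: (tiling_eq_of_coord_sum_eq (eps := 1) hn isT isT tiling).
- exact: (tiling_eq_of_coord_sum_eq (eps := -1) hn isT isT tiling).
Qed.
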